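(* There is an absolute constant $\beta>0$ such that the following holds. Let $X\subset\mathbb{R}^d$ be a finite data set with $|X|=n$, let $\varepsilon\in(0,1)$, and let $C=\{c_1,\dots,c_m\}\subset\mathbb{R}^d$ be a finite nonempty set of projection centers. For each $i$, let $N_i$ be an $\varepsilon$-net of the unit sphere centered at $c_i$, and for $u\in N_i$ let $l_{iu}$ be the line through $c_i$ and $u$; let $\mathcal{L}:=\{l_{iu}: i\in\{1,\dots,m\},u\in N_i\}$. Let $X'$ be the multiset obtained by replacing each $x\in X$ by its orthogonal projection onto a nearest line of $\mathcal{L}$. Then for every finite nonempty $C'\subset\mathbb{R}^d$ and every $p\in\{1,\dots,n\}$, $$|\mathrm{cost}_p(X', C') - \mathrm{cost}_p(X, C')| \leq \beta\,\varepsilon \cdot \mathrm{cost}_p(X, C).$$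
   Context: Distances are Euclidean and $d(x,C):=\min_{c\in C}d(x,c)$. For a finite multiset $Y$ and finite nonempty $C$, $\mathrm{cost}_p(Y,C)$ is the sum of the $p$ largest values of $d(y,C)$, $y\in Y$, counted with multiplicity. *)

From mathcomp Require Import all_boot all_order all_algebra.
From mathcomp Require Import Rstruct.
Set Implicit Arguments. Unset Strict Implicit. Unset Printing Implicit Defensive.
Import Order.TTheory GRing.Theory Num.Theory.
Local Open Scope ring_scope.

Notation pt d := 'rV[Rdefinitions.R]_d.

Definition dotp d (u v : pt d) : Rdefinitions.R := \sum_(i < d) u 0 i * v 0 i.
Definition enorm d (v : pt d) : Rdefinitions.R := Num.sqrt (dotp v v).
Definition edist d (x y : pt d) : Rdefinitions.R := enorm (x - y).

Definition distC d (C : seq (pt d)) (x : pt d) : Rdefinitions.R :=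
  \big[Num.min/ (if C is c :: _ then edist x c else 0)]_(c <- C) edist x c.

Definition costp d (p : nat) (Y : seq (pt d)) (C : seq (pt d)) : Rdefinitions.R :=
  \sum_(i < p) nth 0 (sort (fun a b : Rdefinitions.R => b <= a) (map (distC C) Y)) i.

Definition is_eps_net d (c : pt d) (eps : Rdefinitions.R) (N : seq (pt d)) : Prop :=
  (forall u, u \in N -> edist u c = 1) /\
  (forall y, edist y c = 1 -> exists2 u, u \in N & edist y u <= eps).

(* a line l_{cu} through c and u (|u - c| = 1) is represented by the pair (c, u) *)
Definition lines d (C : seq (pt d)) (N : pt d -> seq (pt d)) : seq (pt d * pt d) :=
  [seq (c, u) | c <- C, u <- N c].

(* orthogonal projection of x onto the line through c and u, |u - c| = 1 *)
Definition proj_line d (l : pt d * pt d) (x : pt d) : pt d :=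
  l.1 + dotp (x - l.1) (l.2 - l.1) *: (l.2 - l.1).

Definition dist_line d (l : pt d * pt d) (x : pt d) : Rdefinitions.R :=
  edist x (proj_line l x).

(* With beta = 1.  Let x' be the projection of x onto its nearest line, and
   let c be a center at distance r = d(x, C) from x.  The eps-net at c has a
   point u within eps of the unit vector (x - c)/r, so x lies within r eps of
   the point c + r (u - c) of the line l_{cu}; hence |x - x'| <= eps d(x, C).
   As d(., C') is 1-Lipschitz, d(x', C') and d(x, C') differ by at most
   eps d(x, C) for every x.  Finally, the sum of the p largest values is the
   maximum of the sums over p-element subsequences, and a subsequence realising
   it for one family of values is admissible for the others, so it is
   subadditive under such pointwise perturbations. *)

From mathcomp Require Import all_boot all_order all_algebra.
From mathcomp Require Import Rstruct lra ring.
Set Implicit Arguments. Unset Strict Implicit. Unset Printing Implicit Defensive.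
Import Order.TTheory GRing.Theory Num.Theory.
Local Open Scope ring_scope.

Section TopSum.
Variable R : realDomainType.
Implicit Types (t v : seq R) (p : nat) (k : R).

Local Notation ger := (fun x y : R => y <= x).

Let ger_trans : transitive ger. Proof. by move=> y x z /= h1 h2; apply: le_trans h2 h1. Qed.
Let ger_refl : reflexive ger. Proof. by move=> x /=. Qed.
Let ger_total : total ger. Proof. by move=> x y; apply: le_total. Qed.

Definition top_sum p (s : seq R) : R := \sum_(i < p) (sort ger s)`_i.

Lemma subseq_sorted_nth_le t v i :
  sorted ger t -> subseq v t -> (i < size v)%N -> v`_i <= t`_i.
Proof.
elim: t v i => [|y t IHt] [|z v] i //= srt_yt.
have srt_t : sorted ger t := path_sorted srt_yt.
case: eqP => [<-|_] sub_vt lt_iv.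
  by case: i lt_iv => [|i] //= lt_iv; apply: IHt.
have lt_it : (i < size t)%N := leq_trans lt_iv (size_subseq sub_vt).
apply: le_trans (IHt _ _ srt_t sub_vt lt_iv) _.
have := sorted_leq_nth ger_trans ger_refl 0 (s := y :: t) srt_yt i i.+1.
by apply; rewrite ?inE /= ?ltnS // ltnW.
Qed.

Lemma top_sum_subseq_le p v t :
  subseq v t -> (p <= size v)%N -> top_sum p v <= top_sum p t.
Proof.
move=> sub_vt le_pv; apply: ler_sum => i _.
apply: subseq_sorted_nth_le.
- exact: (@sort_sorted _ _ ger_total t).
- exact: (@subseq_sort _ _ ger_total ger_trans _ _ sub_vt).
- by rewrite size_sort (leq_trans _ le_pv).
Qed.

Lemma top_sum_size v : top_sum (size v) v = \sum_(x <- v) x.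
Proof.
rewrite /top_sum -(perm_big _ (permEl (perm_sort ger v))) (big_nth 0) big_mkord.
by rewrite size_sort.
Qed.

Lemma sum_subseq_le_top_sum v t : subseq v t -> \sum_(x <- v) x <= top_sum (size v) t.
Proof. by move=> sub_vt; rewrite -top_sum_size top_sum_subseq_le. Qed.

Section MapTopSum.
Variable T : eqType.
Implicit Types (s : seq T) (f g h : T -> R).

Lemma top_sum_map_attained p f s : (p <= size s)%N ->
  exists2 u, subseq u s /\ size u = p & top_sum p (map f s) = \sum_(x <- u) f x.
Proof.
move=> le_ps.
set w := take p (sort (relpre f ger) s).
have [u sub_us perm_wu] : exists2 u, subseq u s & perm_eq w u.
  apply/count_subseqP => x.
  rewrite -(permP (permEl (perm_sort (relpre f ger) s))).
  exact: leq_count_subseq (take_subseq _ _).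
have size_w : size w = p by rewrite size_takel // size_sort.
exists u; first by rewrite -(perm_size perm_wu).
rewrite -(perm_big _ perm_wu) -(big_map f xpredT (fun y => y)) (big_nth 0) big_mkord.
rewrite size_map size_w /top_sum sort_map; apply: eq_bigr => i _.
by rewrite /w map_take nth_take.
Qed.

Lemma top_sum_map_le p k f g h s :
  (p <= size s)%N -> 0 <= k -> {in s, forall x, f x <= g x + k * h x} ->
  top_sum p (map f s) <= top_sum p (map g s) + k * top_sum p (map h s).
Proof.
move=> le_ps k_ge0 le_fgh.
have [u [sub_us size_u] ->] := top_sum_map_attained f le_ps.
have le_top q : \sum_(x <- u) q x <= top_sum p (map q s).
  by have := sum_subseq_le_top_sum (map_subseq q sub_us); rewrite big_map size_map size_u.
apply: le_trans (_ : \sum_(x <- u) (g x + k * h x) <= _).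
  by rewrite !big_seq; apply: ler_sum => x u_x; apply/le_fgh/(mem_subseq sub_us).
by rewrite big_split -mulr_sumr; apply: lerD (le_top g) (ler_wpM2l k_ge0 (le_top h)).
Qed.

End MapTopSum.
End TopSum.

Section Euclidean.
Variable d : nat.
Implicit Types (u v w x y z c : pt d) (a : Rdefinitions.R) (C Y : seq (pt d)).

Lemma dotpp_ge0 v : 0 <= dotp v v.
Proof. by apply: sumr_ge0 => i _; rewrite -expr2 sqr_ge0. Qed.

Lemma enorm_sqr v : enorm v ^+ 2 = dotp v v.
Proof. by rewrite sqr_sqrtr // dotpp_ge0. Qed.

Lemma dotp_subZ w v a :
  dotp (w - a *: v) (w - a *: v) = dotp w w - 2 * a * dotp w v + a ^+ 2 * dotp v v.
Proof.
rewrite /dotp !mulr_sumr -sumrB -big_split /=; apply: eq_bigr => i _.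
by rewrite !mxE; ring.
Qed.

Lemma enormZ a v : enorm (a *: v) = `|a| * enorm v.
Proof.
have dotpZ : dotp (a *: v) (a *: v) = a ^+ 2 * dotp v v.
  by rewrite /dotp mulr_sumr; apply: eq_bigr => i _; rewrite !mxE; ring.
by rewrite /enorm dotpZ sqrtrM ?sqr_ge0 // sqrtr_sqr.
Qed.

Lemma edistC x y : edist x y = edist y x.
Proof. by rewrite /edist -opprB -scaleN1r enormZ normrN normr1 mul1r. Qed.

Lemma lagrange_identity u v :
  2 * (dotp u u * dotp v v - dotp u v ^+ 2) =
  \sum_(i < d) \sum_(j < d) (u 0 i * v 0 j - u 0 j * v 0 i) ^+ 2.
Proof.
have double_sum (F G : 'I_d -> Rdefinitions.R) :
    (\sum_i F i) * (\sum_j G j) = \sum_i \sum_j F i * G j.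
  by rewrite big_distrl; apply: eq_bigr => i _; rewrite big_distrr.
rewrite expr2 /dotp !double_sum mulrBr mulr_natl mulr2n.
rewrite [X in _ + X - _]exchange_big -big_split /= mulr_sumr -sumrB.
apply: eq_bigr => i _; rewrite -big_split mulr_sumr -sumrB /=.
by apply: eq_bigr => j _; ring.
Qed.

Lemma cauchy_schwarz u v : dotp u v ^+ 2 <= dotp u u * dotp v v.
Proof.
rewrite -subr_ge0 -(pmulr_rge0 _ (ltr0Sn _ 1)) lagrange_identity.
by apply: sumr_ge0 => i _; apply: sumr_ge0 => j _; apply: sqr_ge0.
Qed.

Lemma enormD u v : enorm (u + v) <= enorm u + enorm v.
Proof.
have dotpD : dotp (u + v) (u + v) = dotp u u + 2 * dotp u v + dotp v v.
  by rewrite /dotp !mulr_sumr -!big_split /=; apply: eq_bigr => i _; rewrite !mxE; ring.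
rewrite -ler_sqr ?nnegrE ?addr_ge0 ?sqrtr_ge0 // sqrrD !enorm_sqr dotpD.
rewrite lerD2r lerD2l -[X in _ <= X]mulr_natl ler_pM2l // /enorm -sqrtrM ?dotpp_ge0 //.
by apply: le_trans (ler_norm _) _; rewrite -sqrtr_sqr ler_wsqrtr // cauchy_schwarz.
Qed.

Lemma edist_triangle x y z : edist x z <= edist x y + edist y z.
Proof. by rewrite /edist -[x - z](subrKA y); apply: enormD. Qed.

Lemma dist_line_le c u x a :
  enorm (u - c) = 1 -> dist_line (c, u) x <= edist x (c + a *: (u - c)).
Proof.
move=> unit_uc; rewrite /dist_line /proj_line /edist /= !opprD !addrA.
have unit_sqr : dotp (u - c) (u - c) = 1 by rewrite -enorm_sqr unit_uc expr1n.
apply: ler_wsqrtr; rewrite !dotp_subZ unit_sqr !mulr1.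
set t := dotp (x - c) (u - c).
have : 0 <= (a - t) ^+ 2 by apply: sqr_ge0.
nra.
Qed.

Lemma eps_net_line_near c v eps N x :
  is_eps_net c eps N -> enorm v = 1 ->
  exists2 u, u \in N & dist_line (c, u) x <= eps * edist x c.
Proof.
move=> [net_unit net_cover] unit_v.
have [xc0|xc_neq0] := eqVneq (edist x c) 0.
  have unit_cv : edist (c + v) c = 1 by rewrite /edist addrAC subrr add0r.
  have [u Nu _] := net_cover _ unit_cv.
  exists u => //; apply: le_trans (dist_line_le x 0 (net_unit u Nu)) _.
  by rewrite scale0r addr0 xc0 mulr0.
have xc_gt0 : 0 < edist x c by rewrite lt0r xc_neq0 sqrtr_ge0.
set r := edist x c in xc_gt0 *.
have unit_y : edist (c + r^-1 *: (x - c)) c = 1.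
  by rewrite /edist addrAC subrr add0r enormZ ger0_norm ?invr_ge0 ?(ltW xc_gt0) // mulVf ?gt_eqF.
have [u Nu yu] := net_cover _ unit_y.
exists u => //; apply: le_trans (dist_line_le x r (net_unit u Nu)) _.
have rescale : x - (c + r *: (u - c)) = r *: (c + r^-1 *: (x - c) - u).
  by apply/rowP => j; rewrite !mxE; field; rewrite gt_eqF.
rewrite /edist rescale enormZ (ger0_norm (ltW xc_gt0)) mulrC.
apply: ler_wpM2r; [exact: ltW | exact: yu].
Qed.

Lemma distC_le C x c : c \in C -> distC C x <= edist x c.
Proof. by case: C => [//|c0 C] Cc; apply: ge_bigmin_seq. Qed.

Lemma le_distC C x a :
  C != [::] -> {in C, forall c, a <= edist x c} -> a <= distC C x.
Proof.
case: C => [//|c0 C] _ le_a; rewrite /distC big_seq.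
by apply: le_bigmin => [|c]; [apply/le_a/mem_head | apply: le_a].
Qed.

Lemma distC_lipschitz C x y : C != [::] -> distC C x <= distC C y + edist x y.
Proof.
move=> C_neq0; rewrite -lerBlDr; apply: le_distC => // c Cc.
by rewrite lerBlDr addrC (le_trans (distC_le x Cc)) // edist_triangle.
Qed.

Lemma nearest_line_dist_le C N eps l x :
  0 < eps -> C != [::] -> (forall c, c \in C -> is_eps_net c eps (N c)) ->
  l \in lines C N -> {in lines C N, forall l', dist_line l x <= dist_line l' x} ->
  dist_line l x <= eps * distC C x.
Proof.
move=> eps_gt0 C_neq0 nets /allpairsPdep[c0 [u0 [Cc0 Nu0 _]]] l_min.
have unit_v : enorm (u0 - c0) = 1 := (nets c0 Cc0).1 u0 Nu0.
rewrite -ler_pdivrMl //; apply: le_distC => // c Cc; rewrite ler_pdivrMl //.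
have [u Nu le_u] := eps_net_line_near x (nets c Cc) unit_v.
by apply: le_trans le_u; apply: l_min; apply/allpairsPdep; exists c, u.
Qed.

Lemma costpE p Y C : costp p Y C = top_sum p (map (distC C) Y).
Proof. by []. Qed.

End Euclidean.

Theorem lemma4p5 :
  exists beta : Rdefinitions.R, 0 < beta /\
  forall (d : nat) (X : seq (pt d)) (eps : Rdefinitions.R) (C : seq (pt d))
         (N : pt d -> seq (pt d)) (sel : pt d -> pt d * pt d)
         (C' : seq (pt d)) (p : nat),
    uniq X ->
    0 < eps < 1 ->
    uniq C -> C != [::] ->
    (forall c, c \in C -> is_eps_net c eps (N c)) ->
    (forall x, x \in X ->
       sel x \in lines C N /\
       (forall l, l \in lines C N -> dist_line (sel x) x <= dist_line l x)) ->
    C' != [::] ->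
    (1 <= p <= size X)%N ->
    `| costp p [seq proj_line (sel x) x | x <- X] C' - costp p X C' |
      <= beta * eps * costp p X C.
Proof.
exists 1; split=> // d X eps C N sel C' p _ /andP[eps_gt0 _] _ C_neq0 nets sel_min
  C'_neq0 /andP[_ le_pX].
pose proj x := proj_line (sel x) x.
have proj_near x : x \in X -> edist x (proj x) <= eps * distC C x.
  move=> Xx; have [sel_in sel_le] := sel_min x Xx.
  exact: nearest_line_dist_le eps_gt0 C_neq0 nets sel_in sel_le.
have le_proj x : x \in X -> distC C' (proj x) <= distC C' x + eps * distC C x.
  move=> Xx; apply: le_trans (distC_lipschitz _ x C'_neq0) _.
  by rewrite lerD2l edistC proj_near.
have le_orig x : x \in X -> distC C' x <= distC C' (proj x) + eps * distC C x.
  move=> Xx; apply: le_trans (distC_lipschitz x (proj x) C'_neq0) _.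
  by rewrite lerD2l proj_near.
have := top_sum_map_le le_pX (ltW eps_gt0) le_proj.
have := top_sum_map_le le_pX (ltW eps_gt0) le_orig.
rewrite !costpE -map_comp mul1r ler_norml => h1 h2; apply/andP; split; lra.
Qed.
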